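(* Let $G$ be a bipartite graph with parts $B_1,B_2$, and let $a,c\in B_1$ and $b,d\in B_2$. There is perfect pair state transfer between $e_a-e_b$ and $e_c-e_d$ (with respect to the Laplacian of $G$) if and only if there is perfect plus state transfer between $e_a+e_b$ and $e_c+e_d$ (with respect to the unsigned Laplacian of $G$).
   Context: Let $A$ be the adjacency matrix and $\Delta$ the degree matrix of $G$. The Laplacian is $L=\Delta-A$ and the unsigned Laplacian is $L_+=\Delta+A$. Perfect pair state transfer between $e_a-e_b$ and $e_c-e_d$ means $\exp(itL)(e_a-e_b)=\gamma(e_c-e_d)$ for some $t\ge0$ and $\gamma\in\mathbb{C}$, $|\gamma|=1$. Perfect plus state transfer between $e_a+e_b$ and $e_c+e_d$ means $\exp(itL_+)(e_a+e_b)=\gamma(e_c+e_d)$ for some $t\ge0$ and $|\gamma|=1$. Here $e_v$ is the standard basis vector of vertex $v$. *)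

From HB Require Import structures.
From mathcomp Require Import all_boot all_order all_algebra.
From mathcomp Require Import all_classical all_reals all_analysis.
From mathcomp.real_closed Require Import complex.
Set Implicit Arguments. Unset Strict Implicit. Unset Printing Implicit Defensive.
Import Order.TTheory GRing.Theory Num.Theory numFieldNormedType.Exports.
Local Open Scope ring_scope.
Local Open Scope complex_scope.

Definition simple_graph n (e : rel 'I_n) : Prop :=
  (forall u v, e u v = e v u) /\ (forall u, ~~ e u u).

Definition bipartition n (e : rel 'I_n) (B1 B2 : {set 'I_n}) : Prop :=
  B1 :&: B2 = finset.set0 /\ B1 :|: B2 = [set: 'I_n] /\
  (forall u v, e u v -> (u \in B1 /\ v \in B2) \/ (u \in B2 /\ v \in B1)).

Section Mats.
Variable R : realType.
Variable n : nat.
Variable e : rel 'I_n.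

Definition adjmx : 'M[R]_n := \matrix_(i, j) (e i j)%:R.
Definition degmx : 'M[R]_n := diag_mx (\row_i (\sum_j (e i j)%:R)).
Definition laplacian : 'M[R]_n := degmx - adjmx.
Definition signless_laplacian : 'M[R]_n := degmx + adjmx.
End Mats.

(* Complex matrix exponential exp(A) = sum_k A^k / k!, the limit of the
   partial sums taken entrywise (real and imaginary parts separately,
   which is exactly convergence in C). *)
Definition cexpm (R : realType) n (A : 'M[R[i]]_n) : 'M[R[i]]_n :=
  \matrix_(i, j)
    ((limn (series (fun k => complex.Re ((A ^+ k) i j) / (k`!)%:R)))
     +i* (limn (series (fun k => complex.Im ((A ^+ k) i j) / (k`!)%:R)))).

Definition evec (R : realType) n (v : 'I_n) : 'cV[R[i]]_n := delta_mx v 0.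

Definition cmx (R : realType) n (M : 'M[R]_n) : 'M[R[i]]_n :=
  map_mx (fun x => x%:C) M.

Definition state_transfer (R : realType) n (M : 'M[R]_n) (x y : 'cV[R[i]]_n)
  : Prop :=
  exists t : R, 0 <= t /\ exists gamma : R[i], `|gamma| = 1 /\
    cexpm (((t%:C) * 'i) *: cmx M) *m x = gamma *: y.

Definition pair_PST (R : realType) n (e : rel 'I_n) (a b c d : 'I_n) : Prop :=
  state_transfer (laplacian R e) (evec R a - evec R b) (evec R c - evec R d).

Definition plus_PST (R : realType) n (e : rel 'I_n) (a b c d : 'I_n) : Prop :=
  state_transfer (signless_laplacian R e)
    (evec R a + evec R b) (evec R c + evec R d).

From HB Require Import structures.
From mathcomp Require Import all_boot all_order all_algebra.
From mathcomp Require Import all_classical all_reals all_analysis.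
From mathcomp.real_closed Require Import complex.
Import Order.TTheory GRing.Theory Num.Theory.
Import numFieldNormedType.Exports.
Local Open Scope ring_scope.

(* Sign the vertices +1 on B1 and -1 on B2 and let S be the diagonal matrix
   of signs.  For a loopless bipartite graph S L S = L_+, and S S = 1, so
   exp(itL_+) = S exp(itL) S.  Since S (e_a - e_b) = e_a + e_b for a in B1,
   b in B2, conjugation by S carries each pair state transfer to a plus state
   transfer and back. *)

(* No convergence hypothesis: a divergent [limn] is the default value 0. *)
Lemma limn_seriesZ (R : realType) (k : R) (u : R^nat) : k != 0 ->
  limn (series (fun j => k * u j)) = k * limn (series u).
Proof.
move=> k0; rewrite (seriesZ u k).
have [cu|du] := pselect (cvgn (series u)); first exact: limZl_tmp.
have dku : ~ cvgn (k *: series u) by rewrite is_cvgZlE.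
by rewrite (dvgP du) (dvgP dku) /point /= mulr0.
Qed.

Section ExpSeries.
Local Open Scope complex_scope.
Context {R : realType}.

Definition expsum (f : nat -> R[i]) : R[i] :=
  (limn (series (fun k => complex.Re (f k) / (k`!)%:R)))
    +i* (limn (series (fun k => complex.Im (f k) / (k`!)%:R))).

Lemma cexpmE {n} (Y : 'M[R[i]]_n) i j : cexpm Y i j = expsum (fun k => (Y ^+ k) i j).
Proof. exact: mxE. Qed.

Lemma expsumZ (r : R) (f : nat -> R[i]) : r != 0 ->
  expsum (fun k => r%:C * f k) = r%:C * expsum f.
Proof.
move=> r0; rewrite /expsum.
have ReZ k : complex.Re (r%:C * f k) / (k`!)%:R = r * (complex.Re (f k) / (k`!)%:R).
  by case: (f k) => x y /=; rewrite mul0r subr0 mulrA.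
have ImZ k : complex.Im (r%:C * f k) / (k`!)%:R = r * (complex.Im (f k) / (k`!)%:R).
  by case: (f k) => x y /=; rewrite mul0r addr0 mulrA.
rewrite (funext ReZ) (funext ImZ) !limn_seriesZ //.
by apply/eqP; rewrite eq_complex /= !mul0r subr0 addr0 !eqxx.
Qed.

End ExpSeries.

Definition sgnmx {R : realType} {n} (s : 'I_n -> R) : 'M[R[i]]_n :=
  diag_mx (\row_i (s i)%:C)%C.

Section SignConjugation.
Local Open Scope complex_scope.
Context {R : realType} {n : nat} {s : 'I_n -> R}.
Hypothesis s_sq : forall i, s i ^+ 2 = 1.
Local Notation S := (sgnmx s).

Lemma sgnmx_conjE (Y : 'M[R[i]]_n) i j : (S *m Y *m S) i j = (s i * s j)%:C * Y i j.
Proof. by rewrite mul_mx_diag mul_diag_mx !mxE rmorphM /= mulrAC. Qed.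

Lemma sgnmxK : S *m S = 1%:M.
Proof.
apply/matrixP => i j; have := sgnmx_conjE 1%:M i j; rewrite mulmx1 => ->.
rewrite !mxE; case: eqP => [->|]; last by rewrite !mulr0.
by rewrite -expr2 s_sq mulr1.
Qed.

Lemma sgnmx_conjX (Y : 'M[R[i]]_n) k : (S *m Y *m S) ^+ k = S *m Y ^+ k *m S.
Proof.
elim: k => [|k IH]; first by rewrite !expr0 -idmxE mulmx1 sgnmxK.
by rewrite !exprS IH -!mulmxE !mulmxA -(mulmxA (S *m Y)) sgnmxK mulmx1.
Qed.

Lemma cexpm_sgnmx_conj (Y : 'M[R[i]]_n) : cexpm (S *m Y *m S) = S *m cexpm Y *m S.
Proof.
have s_neq0 i : s i != 0 by rewrite -sqrf_eq0 s_sq oner_eq0.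
apply/matrixP => i j.
rewrite (cexpmE (S *m Y *m S)) sgnmx_conjE (cexpmE Y i j) -expsumZ ?mulf_neq0 //.
by congr expsum; apply/funext => k; rewrite sgnmx_conjX sgnmx_conjE.
Qed.

Lemma sgnmx_evec v : S *m evec R v = (s v)%:C *: evec R v.
Proof.
apply/matrixP => i j; rewrite mul_diag_mx !mxE.
by case: eqP => [->|_]; rewrite ?mulr0 ?mulr1 ?mulr0n ?mulr1n.
Qed.

Lemma sgnmx_evecB {u v} : s u = 1 -> s v = -1 ->
  S *m (evec R u - evec R v) = evec R u + evec R v.
Proof.
move=> su sv; rewrite mulmxBr !sgnmx_evec su sv.
by rewrite scale1r rmorphN1 scaleN1r opprK.
Qed.

Lemma state_transfer_sgnmx_conj (M1 M2 : 'M[R]_n) (x y : 'cV[R[i]]_n) :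
  cmx M2 = S *m cmx M1 *m S ->
  state_transfer M1 x y <-> state_transfer M2 (S *m x) (S *m y).
Proof.
move=> M21; have S_inj : injective (mulmx S : 'cV[R[i]]_n -> 'cV_n).
  by apply: (can_inj (g := mulmx S)) => z; rewrite mulmxA sgnmxK mul1mx.
have expS t : cexpm ((t%:C * 'i) *: cmx M2) = S *m cexpm ((t%:C * 'i) *: cmx M1) *m S.
  by rewrite M21 scalemxAl scalemxAr cexpm_sgnmx_conj.
have eq_transfer t g : (cexpm ((t%:C * 'i) *: cmx M2) *m (S *m x) = g *: (S *m y)) <->
    (cexpm ((t%:C * 'i) *: cmx M1) *m x = g *: y).
  rewrite expS -(mulmxA _ S) (mulmxA S S) sgnmxK mul1mx -mulmxA scalemxAr.
  by split=> [/S_inj|->].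
by split=> -[t [t0 [g [g1 H]]]]; exists t; split=> //; exists g; split=> //;
  apply/(eq_transfer t g).
Qed.

Context {e : rel 'I_n}.
Hypothesis e_irrefl : forall u, ~~ e u u.
Hypothesis s_edge : forall u v, e u v -> s u * s v = -1.

Lemma signless_laplacian_sgnmx_conj :
  cmx (signless_laplacian R e) = S *m cmx (laplacian R e) *m S.
Proof.
apply/matrixP => i j; rewrite sgnmx_conjE /cmx !mxE -rmorphM; congr (_%:C).
have [<-|_] := eqVneq i j.
  by rewrite (negbTE (e_irrefl i)) mulr1n -expr2 s_sq mul1r addr0 subr0.
rewrite !mulr0n !add0r mulrN.
by case E: (e i j); rewrite ?mulr0 ?oppr0 // s_edge // mulN1r opprK.
Qed.

End SignConjugation.

Theorem mainTheorem7 (R : realType) (n : nat) (e : rel 'I_n)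
  (B1 B2 : {set 'I_n}) (a b c d : 'I_n) :
  simple_graph e -> bipartition e B1 B2 ->
  a \in B1 -> c \in B1 -> b \in B2 -> d \in B2 ->
  (pair_PST R e a b c d <-> plus_PST R e a b c d).
Proof.
move=> [_ e_irrefl] [B12 [_ e_bip]] aB1 cB1 bB2 dB2.
have notB1 x : x \in B2 -> x \notin B1.
  by move=> xB2; move/setP/(_ x): B12; rewrite !inE xB2 andbT => ->.
pose s v : R := if v \in B1 then 1 else -1.
have s_sq v : s v ^+ 2 = 1 by rewrite /s; case: ifP; rewrite ?expr1n ?sqrrN ?expr1n.
have s_B1 v : v \in B1 -> s v = 1 by rewrite /s => ->.
have s_B2 v : v \in B2 -> s v = -1 by rewrite /s => /notB1/negbTE ->.
have s_edge u v : e u v -> s u * s v = -1.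
  case/e_bip => -[uB vB]; first by rewrite (s_B1 _ uB) (s_B2 _ vB) mul1r.
  by rewrite (s_B2 _ uB) (s_B1 _ vB) mulr1.
rewrite /pair_PST /plus_PST -(sgnmx_evecB (s_B1 _ aB1) (s_B2 _ bB2)).
rewrite -(sgnmx_evecB (s_B1 _ cB1) (s_B2 _ dB2)).
apply: (state_transfer_sgnmx_conj s_sq).
exact: (signless_laplacian_sgnmx_conj s_sq e_irrefl s_edge).
Qed.
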